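(* For every $y\in\mathcal S\times[-1,1]\times\mathcal S$ and all $p,q\in\Delta_d^{\mathcal S}$, \[ \ell^\Theta_{\mathrm C,\infty}\bigl(H(p,y),H(q,y)\bigr)\le\ell^\Theta_{\mathrm C,\infty}(p,q). \]
   Context: $\mathcal S=\{1,\dots,m\}$ finite. $\Theta=\{\theta_1<\dots<\theta_d\}$ with constant stride $\Delta>0$; $\Delta_d$ the probability simplex of $\mathbb R^d$; $\Delta_d^{\mathcal S}$ the set of families $(p_i)_{i\in\mathcal S}$, $p_i\in\Delta_d$. For $u\in\Delta_d$, $\eta^{u,0}:=\sum_ku_k\delta_{\theta_k}$. Categorical projection $\Pi^\Theta_{\mathrm C}$: $\delta_x\mapsto\delta_{\theta_1}$ if $x\le\theta_1$, $\delta_{\theta_d}$ if $x\ge\theta_d$, $\frac{\theta_{k+1}-x}{\Delta}\delta_{\theta_k}+\frac{x-\theta_k}{\Delta}\delta_{\theta_{k+1}}$ if $\theta_k\le x\le\theta_{k+1}$, extended linearly to probability laws. For $b\in\mathbb R$, $L_bu\in\Delta_d$ is defined by $\Pi^\Theta_{\mathrm C}(\text{law of }X+b,\ X\sim\eta^{u,0})=\eta^{L_bu,0}$. One-sample backup: for $y=(s,b,s')$, $H(p,y)=q$ with $q_u=p_u$ for $u\ne s$ and $q_s=L_bp_{s'}$. Coordinate Cramér metric: $F_u(\theta_k):=\sum_{j\le k}u_j$, $\ell^\Theta_{\mathrm C}(u,v)^2:=\Delta\sum_{k=1}^{d-1}(F_u(\theta_k)-F_v(\theta_k))^2$, $\ell^\Theta_{\mathrm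 C,\infty}(p,q):=\max_i\ell^\Theta_{\mathrm C}(p_i,q_i)$. *)

From HB Require Import structures.
From mathcomp Require Import all_boot all_order all_algebra.
Set Implicit Arguments. Unset Strict Implicit. Unset Printing Implicit Defensive.
Import Order.TTheory GRing.Theory Num.Theory.
Local Open Scope ring_scope.

Section Defs.
Variable R : rcfType.

(* Support Theta: theta_k = theta1 + k * Delta, k = 0, ..., d-1 (0-indexed). *)
Definition atom (theta1 Delta : R) (k : nat) : R := theta1 + k%:R * Delta.

Definition in_simplex (d : nat) (u : 'I_d -> R) : Prop :=
  (forall k, 0 <= u k) /\ \sum_(k < d) u k = 1.

Definition in_simplex_fam (m d : nat) (p : 'I_m -> 'I_d -> R) : Prop :=
  forall i, in_simplex (p i).

(* Categorical projection of the Dirac mass delta_x, coordinate j. *)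
Definition cat_proj_dirac (d : nat) (theta1 Delta : R) (x : R) (j : 'I_d) : R :=
  let th := atom theta1 Delta in
  if x <= th 0%N then ((j : nat) == 0%N)%:R
  else if th d.-1 <= x then ((j : nat) == d.-1)%:R
  else if (th j <= x) && (x <= th j.+1) then (th j.+1 - x) / Delta
  else if (0 < (j : nat))%N && (th j.-1 <= x) && (x <= th j)
       then (x - th j.-1) / Delta
  else 0.

(* L_b u : projection (extended linearly) of the law of X + b, X ~ sum_k u_k delta_{theta_k}. *)
Definition Lshift (d : nat) (theta1 Delta b : R) (u : 'I_d -> R) : 'I_d -> R :=
  fun j => \sum_(k < d) u k * cat_proj_dirac theta1 Delta (atom theta1 Delta k + b) j.

Definition backup (m d : nat) (theta1 Delta : R) (p : 'I_m -> 'I_d -> R)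
    (s : 'I_m) (b : R) (s' : 'I_m) : 'I_m -> 'I_d -> R :=
  fun u => if u == s then Lshift theta1 Delta b (p s') else p u.

Definition cdf (d : nat) (u : 'I_d -> R) (k : nat) : R :=
  \sum_(j < d | (j <= k)%N) u j.

(* Coordinate Cramer metric: sqrt(Delta * sum_{k=1}^{d-1} (F_u(theta_k)-F_v(theta_k))^2). *)
Definition cramer (d : nat) (Delta : R) (u v : 'I_d -> R) : R :=
  Num.sqrt (Delta * \sum_(k < d.-1) (cdf u k - cdf v k) ^+ 2).

(* Sup-Cramer metric over states (max of nonnegative reals; 0 if S empty). *)
Definition cramer_inf (m d : nat) (Delta : R) (p q : 'I_m -> 'I_d -> R) : R :=
  \big[Num.max/0]_(i < m) cramer Delta (p i) (q i).

End Defs.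

(* In grid coordinates y = (x - theta1) / Delta, the categorical projection of
   the Dirac mass at y has CDF  j |-> clamp01 (j + 1 - y).  Hence the CDF of
   L_b u at j is  sum_k u_k clamp01 (j + 1 - k - beta)  with beta = b / Delta.
   When u and v have the same total mass, summation by parts writes the CDF
   difference of L_b u and L_b v as M applied to the CDF difference of u and v,
   where M j l is the hat-function weight of l + beta at j.  The matrix M is
   doubly substochastic, and such a matrix contracts the Euclidean norm (Jensen
   along each row, then sum the columns).  The backup only replaces the state s
   by L_b applied to the state s', so the sup-Cramer distance does not grow. *)

From mathcomp Require Import all_boot all_order all_algebra.
From mathcomp Require Import ring lra.
Set Implicit Arguments. Unset Strict Implicit. Unset Printing Implicit Defensive.
Import Order.TTheory GRing.Theory Num.Theory.
Local Open Scope ring_scope.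

Section DoublySubstochastic.
Variable R : realFieldType.

Lemma sqr_wsum_le_wsum_sqr (I : finType) (w a : I -> R) :
  (forall i, 0 <= w i) -> \sum_i w i <= 1 ->
  (\sum_i w i * a i) ^+ 2 <= \sum_i w i * a i ^+ 2.
Proof.
move=> w_ge0 sw_le1; set T := \sum_i w i * a i; set S := \sum_i w i.
have variance : \sum_i w i * (a i - T) ^+ 2
    = \sum_i w i * a i ^+ 2 - (2 * T) * T + T ^+ 2 * S.
  rewrite (eq_bigr (fun i => w i * a i ^+ 2 - (2 * T) * (w i * a i) + T ^+ 2 * w i));
    last by move=> i _; ring.
  by rewrite big_split sumrB /= -!mulr_sumr.
have : 0 <= \sum_i w i * (a i - T) ^+ 2.
  by apply: sumr_ge0 => i _; rewrite mulr_ge0 ?sqr_ge0.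
have : 0 <= T ^+ 2 * (1 - S) by rewrite mulr_ge0 ?sqr_ge0 ?subr_ge0.
rewrite variance; nra.
Qed.

Lemma sum_sqr_substochastic_le (I J : finType) (M : I -> J -> R) (a : J -> R) :
  (forall i j, 0 <= M i j) ->
  (forall i, \sum_j M i j <= 1) -> (forall j, \sum_i M i j <= 1) ->
  \sum_i (\sum_j M i j * a j) ^+ 2 <= \sum_j a j ^+ 2.
Proof.
move=> M_ge0 row_le1 col_le1.
apply: (@le_trans _ _ (\sum_i \sum_j M i j * a j ^+ 2)).
  by apply: ler_sum => i _; apply: sqr_wsum_le_wsum_sqr.
rewrite exchange_big /=; apply: ler_sum => j _.
by rewrite -mulr_suml ler_piMl ?sqr_ge0.
Qed.

End DoublySubstochastic.

Lemma sum_by_parts0 (V : comPzRingType) (n : nat) (w : 'I_n.+1 -> V) (c : nat -> V) :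
  \sum_k w k = 0 ->
  \sum_(k < n.+1) w k * c k
    = \sum_(l < n) (c l - c l.+1) * \sum_(k < n.+1 | (k <= l)%N) w k.
Proof.
move=> sw0.
have tail k : (k <= n)%N -> c k = c n + \sum_(l < n | (k <= l)%N) (c l - c l.+1).
  move=> kn; rewrite -(big_geq_mkord k n xpredT (fun l => c l - c l.+1)).
  rewrite (telescope_sumr_eq (fun l => - c l)) ?opprK ?addNKr // => l _.
  by rewrite opprK addrC.
under eq_bigr => k _ do rewrite (tail k (ltn_ord k)) mulrDr mulr_sumr.
rewrite big_split /= -mulr_suml sw0 mul0r add0r (exchange_big_dep xpredT) //=.
by apply: eq_bigr => l _; rewrite mulr_sumr; apply: eq_bigr => k _; rewrite mulrC.
Qed.

Section HatMass.
Variable R : realFieldType.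

Definition clamp01 (z : R) : R := if z <= 0 then 0 else if 1 <= z then 1 else z.

Lemma clamp01_le0 (z : R) : z <= 0 -> clamp01 z = 0.
Proof. by rewrite /clamp01 => ->. Qed.

Lemma clamp01_ge1 (z : R) : 1 <= z -> clamp01 z = 1.
Proof. by move=> z1; rewrite /clamp01 z1 lt_geF //; lra. Qed.

Lemma clamp01_id (z : R) : 0 <= z -> z <= 1 -> clamp01 z = z.
Proof.
move=> z0 z1; rewrite /clamp01.
by case: (lerP z 0) => [|_]; case: (lerP 1 z) => //; lra.
Qed.

Lemma clamp01_ge0 (z : R) : 0 <= clamp01 z.
Proof.
by rewrite /clamp01; case: (lerP z 0) => // z0; case: (lerP 1 z) => // _; apply: ltW.
Qed.

Lemma clamp01_le1 (z : R) : clamp01 z <= 1.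
Proof. by rewrite /clamp01; case: (lerP z 0) => // _; case: (lerP 1 z) => // /ltW. Qed.

Lemma clamp01_homo : {homo clamp01 : x y / x <= y}.
Proof.
move=> x y xy; rewrite {1}/clamp01; case: (lerP x 0) => x0; first exact: clamp01_ge0.
case: (lerP 1 x) => x1; first by rewrite clamp01_ge1 //; lra.
by rewrite /clamp01; case: (lerP y 0) => y0; [lra | case: (lerP 1 y) => //; lra].
Qed.

(* [hat_mass y j = max(0, 1 - |y - j|)], the weight that linear interpolation
   of [y] puts on the grid point [j]. *)
Definition hat_mass (y : R) (j : nat) : R := clamp01 (j.+1%:R - y) - clamp01 (j%:R - y).

Lemma hat_mass_ge0 (y : R) (j : nat) : 0 <= hat_mass y j.
Proof. by rewrite subr_ge0 clamp01_homo // lerD2r ler_nat. Qed.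

Lemma sum_hat_mass (y : R) (n : nat) :
  \sum_(j < n) hat_mass y j = clamp01 (n%:R - y) - clamp01 (- y).
Proof. by rewrite -(big_mkord xpredT) telescope_sumr // sub0r. Qed.

Lemma sum_hat_mass_le1 (y : R) (n : nat) : \sum_(j < n) hat_mass y j <= 1.
Proof.
rewrite sum_hat_mass; have := clamp01_le1 (n%:R - y); have := clamp01_ge0 (- y).
lra.
Qed.

Lemma sum_shifted_hat_mass_le1 (beta : R) (j n : nat) :
  \sum_(l < n) hat_mass (l%:R + beta) j <= 1.
Proof.
rewrite -(big_mkord xpredT (fun l => hat_mass (l%:R + beta) j))
  (telescope_sumr_eq (fun l => - clamp01 (j.+1%:R - (l%:R + beta)))) //.
  have := clamp01_le1 (j.+1%:R - (0%:R + beta)).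
  have := clamp01_ge0 (j.+1%:R - (n%:R + beta)).
  lra.
move=> l _; rewrite /hat_mass opprK [RHS]addrC -!natr1.
by congr (_ - clamp01 _); ring.
Qed.

Lemma hat_mass_interp (j : nat) (y : R) : 0 < y ->
  (if (j%:R <= y) && (y <= j.+1%:R) then j.+1%:R - y
   else if (0 < j)%N && (j.-1%:R <= y) && (y <= j%:R) then y - j.-1%:R else 0)
  = hat_mass y j.
Proof.
rewrite /hat_mass; case: j => [|i] y0 /=.
  rewrite [clamp01 (0 - y)]clamp01_le0 ?subr0 ?(ltW y0); last lra.
  by case: (lerP y 1) => y1 /=; [rewrite clamp01_id | rewrite clamp01_le0]; lra.
rewrite -!natr1; set t := i%:R.
case: (lerP (t + 1) y) => y1 /=.
  case: (lerP y (t + 1 + 1)) => y2 /=.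
    by rewrite [clamp01 (t + 1 - y)]clamp01_le0 ?clamp01_id; lra.
  have -> : (y <= t + 1) = false by apply: lt_geF; lra.
  by rewrite andbF !clamp01_le0; lra.
case: (lerP t y) => y2 /=.
  by rewrite (ltW y1) clamp01_ge1 ?clamp01_id; lra.
by rewrite !clamp01_ge1; lra.
Qed.

Definition proj_mass (d : nat) (y : R) (j : nat) : R :=
  if y <= 0 then (j == 0)%N%:R
  else if d.-1%:R <= y then (j == d.-1)%N%:R
  else hat_mass y j.

Lemma sum_proj_mass (d j : nat) (y : R) : (j < d.-1)%N ->
  \sum_(i < j.+1) proj_mass d y i = clamp01 (j.+1%:R - y).
Proof.
move=> lt_j_d; rewrite /proj_mass; case: (lerP y 0) => y0.
  rewrite big_ord_recl /= big1 ?addr0 ?clamp01_ge1 //.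
  have : 1 <= j.+1%:R :> R by rewrite ler1n.
  lra.
case: (lerP d.-1%:R y) => y1.
  rewrite big1 => [|i _]; last by rewrite ltn_eqF // (leq_trans (ltn_ord i) lt_j_d).
  rewrite clamp01_le0 //.
  have : j.+1%:R <= d.-1%:R :> R by rewrite ler_nat.
  lra.
by rewrite sum_hat_mass [clamp01 (- y)]clamp01_le0 ?subr0 //; lra.
Qed.

Lemma shifted_cdf_contraction (n : nat) (beta : R) (w : 'I_n.+1 -> R) :
  \sum_k w k = 0 ->
  \sum_(j < n) (\sum_(k < n.+1) w k * clamp01 (j.+1%:R - (k%:R + beta))) ^+ 2
    <= \sum_(l < n) (\sum_(k < n.+1 | (k <= l)%N) w k) ^+ 2.
Proof.
move=> sw0.
have hat_step (j l : nat) :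
    clamp01 (j.+1%:R - (l%:R + beta)) - clamp01 (j.+1%:R - (l.+1%:R + beta))
    = hat_mass (l%:R + beta) j.
  by rewrite /hat_mass -!natr1; congr (_ - clamp01 _); ring.
under eq_bigr => j _.
  rewrite (sum_by_parts0 (fun k => clamp01 (j.+1%:R - (k%:R + beta))) sw0).
  under eq_bigr => l _ do rewrite hat_step.
  over.
apply: sum_sqr_substochastic_le => [j l|j|l].
- exact: hat_mass_ge0.
- exact: sum_shifted_hat_mass_le1.
- exact: sum_hat_mass_le1.
Qed.

End HatMass.

Section GridProjection.
Variables (R : rcfType) (theta1 Delta : R).
Hypothesis Delta_gt0 : 0 < Delta.

Definition grid_coord (x : R) : R := (x - theta1) / Delta.

Lemma atom_le (n : nat) (x : R) : (atom theta1 Delta n <= x) = (n%:R <= grid_coord x).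
Proof. by rewrite /grid_coord ler_pdivlMr // lerBrDl. Qed.

Lemma le_atom (n : nat) (x : R) : (x <= atom theta1 Delta n) = (grid_coord x <= n%:R).
Proof. by rewrite /grid_coord ler_pdivrMr // lerBlDl. Qed.

Lemma grid_coord_atomD (k : nat) (b : R) :
  grid_coord (atom theta1 Delta k + b) = k%:R + b / Delta.
Proof. by rewrite /grid_coord /atom; field; rewrite gt_eqF. Qed.

Lemma cat_proj_diracE (d : nat) (x : R) (j : 'I_d) :
  cat_proj_dirac theta1 Delta x j = proj_mass d (grid_coord x) j.
Proof.
rewrite /cat_proj_dirac /proj_mass le_atom atom_le.
case: ifP => // /negbT; rewrite -ltNge => y0; case: ifP => // _.
have atomB (n : nat) : (atom theta1 Delta n - x) / Delta = n%:R - grid_coord x.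
  by rewrite /grid_coord /atom; field; rewrite gt_eqF.
have Batom (n : nat) : (x - atom theta1 Delta n) / Delta = grid_coord x - n%:R.
  by rewrite /grid_coord /atom; field; rewrite gt_eqF.
by rewrite !atom_le !le_atom atomB Batom hat_mass_interp.
Qed.

Lemma cdf_cat_proj_dirac (d j : nat) (x : R) : (j < d.-1)%N ->
  cdf (cat_proj_dirac theta1 Delta x : 'I_d -> R) j = clamp01 (j.+1%:R - grid_coord x).
Proof.
move=> lt_j_d; rewrite /cdf (eq_bigr (fun i : 'I_d => proj_mass d (grid_coord x) i)).
  rewrite -(sum_proj_mass (grid_coord x) lt_j_d).
  by rewrite (big_ord_widen_cond d xpredT _ (leq_trans lt_j_d (leq_pred d))).
by move=> i _; rewrite cat_proj_diracE.
Qed.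

Lemma cdf_Lshift (d : nat) (b : R) (u : 'I_d -> R) (j : nat) : (j < d.-1)%N ->
  cdf (Lshift theta1 Delta b u) j
    = \sum_k u k * clamp01 (j.+1%:R - (k%:R + b / Delta)).
Proof.
move=> lt_j_d; rewrite /cdf /Lshift (exchange_big_dep xpredT) //=.
apply: eq_bigr => k _.
rewrite -mulr_sumr -grid_coord_atomD -(cdf_cat_proj_dirac _ lt_j_d).
by rewrite /cdf; under eq_bigl do rewrite andbT.
Qed.

Lemma cramer_Lshift_le (d : nat) (b : R) (u v : 'I_d -> R) :
  \sum_k u k = \sum_k v k ->
  cramer Delta (Lshift theta1 Delta b u) (Lshift theta1 Delta b v) <= cramer Delta u v.
Proof.
case: d u v => [|n] u v suv; first by rewrite /cramer !big_ord0.
rewrite /cramer; apply/ler_wsqrtr/ler_wpM2l; first exact: ltW.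
have sw0 : \sum_k (u k - v k) = 0 by rewrite sumrB suv subrr.
under eq_bigr => j _ do rewrite !cdf_Lshift // -sumrB.
under [X in _ <= X]eq_bigr => l _ do rewrite /cdf -sumrB.
under eq_bigr => j _ do under eq_bigr => k _ do rewrite -mulrBl.
exact: shifted_cdf_contraction.
Qed.

End GridProjection.

Theorem lemma2 (R : rcfType) (m d : nat) (theta1 Delta : R) (hDelta : 0 < Delta)
    (s : 'I_m) (b : R) (s' : 'I_m) (hb : -1 <= b <= 1)
    (p q : 'I_m -> 'I_d -> R) (hp : in_simplex_fam p) (hq : in_simplex_fam q) :
  cramer_inf Delta (backup theta1 Delta p s b s') (backup theta1 Delta q s b s')
  <= cramer_inf Delta p q.
Proof.
rewrite /cramer_inf; apply: bigmax_le => [|i _].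
  exact: le_trans (sqrtr_ge0 _) (le_bigmax _ _ s).
rewrite /backup; case: eqP => _; last exact: le_bigmax.
apply: le_trans (le_bigmax _ _ s').
by apply: cramer_Lshift_le; rewrite ?(hp s').2 ?(hq s').2.
Qed.
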